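(* Let $U^{(n)}$ be uniformly distributed on $\{1,\dots,n\}$ and, for $1\le m<n$, put $\widetilde U^{(n,m)}:=\prod_{m<p\le n,\ p\ \text{prime}}p^{\mathbbm{1}_{\{\lambda_p(U^{(n)})\ge1\}}}$. Assume that $m_n\le n^{1/2}$ for all sufficiently large $n$ and $m_n\to\infty$ as $n\to\infty$. Then $${\rm Var}\bigl(\log\widetilde U^{(n,m_n)}\bigr)\sim 2^{-1}\log^2 m_n,\qquad n\to\infty.$$
   Context: For a prime $p$ and $k\in\mathbb{N}$, $\lambda_p(k)$ is the exponent of $p$ in the prime factorization of $k$. $a_n\sim b_n$ means $a_n/b_n\to1$. *)

From mathcomp Require Import all_boot.
From Stdlib Require Import Reals.
From Coquelicot Require Import Coquelicot.

(* lambda_p(k) = logn p k.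
   utilde n m k = prod_{m < p <= n, p prime} p ^ 1{lambda_p(k) >= 1}. *)
Definition utilde (n m k : nat) : nat :=
  (\prod_(m.+1 <= p < n.+1 | prime p) p ^ (0 < logn p k))%N.

Definition unif_mean (n : nat) (X : nat -> R) : R :=
  Rdiv (\big[Rplus/0%R]_(1 <= k < n.+1) X k) (INR n).

Definition unif_var (n : nat) (X : nat -> R) : R :=
  unif_mean n (fun k => Rsqr (Rminus (X k) (unif_mean n X))).

From HB Require Import structures.
From mathcomp Require Import all_boot zify.
From Stdlib Require Import Reals Lra.
From Coquelicot Require Import Coquelicot.
Open Scope R_scope.

(* For [1 <= k <= n], [ln (utilde n m k) = R_n k - R_m k], where [R_x k = ln_rad_upto x k]
   is the sum of [ln p] over the primes [p <= x] dividing [k].  Since [n >= m^2], the events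
   [p | U], [p <= m], are nearly independent with probabilities [floor(n/p)/n ~ 1/p], so
   [Var R_m(U) = sum_{p <= m} ln p ^ 2 / p + O(1)]; by Mertens' estimate
   [sum_{p <= x} ln p / p = ln x + O(1)] (from Legendre's formula for [ln x!] and Chebyshev's
   bound [theta x <= x ln 4]) and Abel summation, this is [ln m ^ 2 / 2 + O(ln m)].
   On the other hand [R_n k] differs from [ln k] by at most [2 ln d], where [d^2] is the
   largest square dividing [k], and [ln U] is concentrated near [ln n], so
   [Var R_n(U) = O(1)].  Hence [Var (R_n - R_m)(U) ~ Var R_m(U)]. *)

Lemma RplusA : associative Rplus. Proof. by move=> x y z; rewrite Rplus_assoc. Qed.
Lemma RmultA : associative Rmult. Proof. by move=> x y z; rewrite Rmult_assoc. Qed.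

HB.instance Definition _ := Monoid.isComLaw.Build R 0 Rplus RplusA Rplus_comm Rplus_0_l.
HB.instance Definition _ := Monoid.isComLaw.Build R 1 Rmult RmultA Rmult_comm Rmult_1_l.
HB.instance Definition _ := Monoid.isMulLaw.Build R 0 Rmult Rmult_0_l Rmult_0_r.
HB.instance Definition _ :=
  Monoid.isAddLaw.Build R Rmult Rplus Rmult_plus_distr_r Rmult_plus_distr_l.

(* The bigop lemmas below are restated with [Rplus] itself as the operator rather than its
   canonical monoid law, so that their conclusions are usable by [lra] and [ring]. *)
Section RealSums.

Variables (a b : nat) (P : pred nat).

Lemma sumR_le (F G : nat -> R) :
  (forall i, (a <= i < b)%nat -> P i -> F i <= G i) ->
  \big[Rplus/0]_(a <= i < b | P i) F i <= \big[Rplus/0]_(a <= i < b | P i) G i.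
Proof.
move=> FG; rewrite big_nat_cond [X in _ <= X]big_nat_cond.
apply: (big_ind2 (fun x y => x <= y)) => [|x1 x2 y1 y2|i /andP[]]; [lra|lra|exact: FG].
Qed.

Lemma sumR_ge0 (F : nat -> R) :
  (forall i, (a <= i < b)%nat -> P i -> 0 <= F i) ->
  0 <= \big[Rplus/0]_(a <= i < b | P i) F i.
Proof.
move=> F0; rewrite big_nat_cond.
apply: (big_ind (fun x => 0 <= x)) => [|x y|i /andP[]]; [lra|lra|exact: F0].
Qed.

Lemma Rabs_sumR_le (F : nat -> R) :
  Rabs (\big[Rplus/0]_(a <= i < b | P i) F i) <= \big[Rplus/0]_(a <= i < b | P i) Rabs (F i).
Proof.
apply: (big_ind2 (fun x y => Rabs x <= y)) => [|x1 x2 y1 y2 le1 le2|i _].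
- by rewrite Rabs_R0; lra.
- by apply: Rle_trans (Rabs_triang _ _) _; lra.
- exact: Rle_refl.
Qed.

Lemma sumR_add (F G : nat -> R) :
  \big[Rplus/0]_(a <= i < b | P i) (F i + G i) =
  \big[Rplus/0]_(a <= i < b | P i) F i + \big[Rplus/0]_(a <= i < b | P i) G i.
Proof. exact: big_split. Qed.

Lemma sumR_scale (c : R) (F : nat -> R) :
  \big[Rplus/0]_(a <= i < b | P i) (c * F i) = c * \big[Rplus/0]_(a <= i < b | P i) F i.
Proof. by rewrite big_distrr. Qed.

Lemma sumR_sub (F G : nat -> R) :
  \big[Rplus/0]_(a <= i < b | P i) (F i - G i) =
  \big[Rplus/0]_(a <= i < b | P i) F i - \big[Rplus/0]_(a <= i < b | P i) G i.
Proof.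
rewrite sumR_add; congr Rplus.
by apply: (big_ind2 (fun x y => x = - y)) => [|x1 x2 y1 y2 -> ->|]; rewrite //; lra.
Qed.

Lemma sumR_sqr (F : nat -> R) :
  (\big[Rplus/0]_(a <= i < b | P i) F i) ^ 2 =
  \big[Rplus/0]_(a <= i < b | P i) \big[Rplus/0]_(a <= j < b | P j) (F i * F j).
Proof. by rewrite /= Rmult_1_r big_distrlr. Qed.

Lemma sumR_ge_term (F : nat -> R) j : (a <= j < b)%nat -> P j ->
  (forall i, (a <= i < b)%nat -> P i -> 0 <= F i) ->
  F j <= \big[Rplus/0]_(a <= i < b | P i) F i.
Proof.
move=> jab Pj F0; rewrite big_mkcond (bigD1_seq j) ?mem_index_iota ?iota_uniq //= Pj.
suff : 0 <= \big[Rplus/0]_(i <- index_iota a b | i != j) (if P i then F i else 0) by lra.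
rewrite big_seq_cond; apply: (big_ind (fun x => 0 <= x)) => [|x y|i /andP[iab _]]; try lra.
by rewrite mem_index_iota in iab; case: (boolP (P i)) => Pi; [exact: F0 | lra].
Qed.

Lemma sumR_single (F : nat -> R) j : (a <= j < b)%nat -> P j ->
  (forall i, P i -> i <> j -> F i = 0) -> \big[Rplus/0]_(a <= i < b | P i) F i = F j.
Proof.
move=> jab Pj F0; rewrite big_mkcond (bigD1_seq j) ?mem_index_iota ?iota_uniq //= Pj.
by rewrite big1 ?Rplus_0_r // => i /eqP ij; case: (boolP (P i)) => // Pi; exact: F0.
Qed.

End RealSums.

Lemma sumR_filter_le (a b : nat) (P : pred nat) (F : nat -> R) :
  (forall i, (a <= i < b)%nat -> 0 <= F i) ->
  \big[Rplus/0]_(a <= i < b | P i) F i <= \big[Rplus/0]_(a <= i < b) F i.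
Proof.
move=> F0; rewrite big_mkcond; apply: sumR_le => i iab _.
by case: (P i); [lra | exact: F0].
Qed.

Lemma sumR_const (a b : nat) (c : R) : \big[Rplus/0]_(a <= i < b) c = INR (b - a) * c.
Proof.
rewrite big_const_nat; elim: (b - a)%nat => [|k IH]; first by rewrite /=; lra.
by rewrite iterS IH S_INR; lra.
Qed.

Lemma sumR_cat (a b c : nat) (P : pred nat) (F : nat -> R) : (a <= b <= c)%nat ->
  \big[Rplus/0]_(a <= i < c | P i) F i =
  \big[Rplus/0]_(a <= i < b | P i) F i + \big[Rplus/0]_(b <= i < c | P i) F i.
Proof. by case/andP=> ab bc; rewrite (@big_cat_nat _ _ _ b). Qed.

Lemma sumR_subrange_le (a a' b' b : nat) (P : pred nat) (F : nat -> R) :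
  (a <= a')%nat -> (b' <= b)%nat -> (forall i, (a <= i < b)%nat -> P i -> 0 <= F i) ->
  \big[Rplus/0]_(a' <= i < b' | P i) F i <= \big[Rplus/0]_(a <= i < b | P i) F i.
Proof.
move=> aa' b'b F0; case: (leqP b' a') => [b'a'|a'b']; first by rewrite big_geq //; exact: sumR_ge0.
rewrite (sumR_cat a a' b) ?aa' ?(leq_trans (ltnW a'b')) //.
rewrite (sumR_cat a' b' b) ?(ltnW a'b') //.
have := sumR_ge0 a a' P F ltac:(by move=> i /andP[ai ia'] Pi; apply: F0; lia).
have := sumR_ge0 b' b P F ltac:(by move=> i /andP[b'i ib] Pi; apply: F0; lia).
lra.
Qed.

Lemma sumR_nat_recr (a b : nat) (F : nat -> R) : (a <= b)%nat ->
  \big[Rplus/0]_(a <= i < b.+1) F i = \big[Rplus/0]_(a <= i < b) F i + F b.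
Proof. exact: big_nat_recr. Qed.

Lemma sumR_nat_recr_cond (a b : nat) (P : pred nat) (F : nat -> R) : (a <= b)%nat ->
  \big[Rplus/0]_(a <= i < b.+1 | P i) F i =
  \big[Rplus/0]_(a <= i < b | P i) F i + (if P b then F b else 0).
Proof. by move=> ab; rewrite big_mkcond big_nat_recr // -big_mkcond. Qed.

Lemma INR_sum (a b : nat) (P : pred nat) (f : nat -> nat) :
  INR (\sum_(a <= i < b | P i) f i)%nat = \big[Rplus/0]_(a <= i < b | P i) INR (f i).
Proof. by apply: (big_ind2 (fun x y => INR x = y)) => // x1 x2 y1 y2 <- <-; rewrite plus_INR. Qed.

Lemma INR_gt0 {k : nat} : (0 < k)%nat -> 0 < INR k.
Proof. by move=> k0; apply: lt_0_INR; apply/ltP. Qed.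

Lemma INR_ge1 {k : nat} : (1 <= k)%nat -> 1 <= INR k.
Proof. by move=> k1; apply: (le_INR 1); apply/leP. Qed.

Lemma INR_prime_ge2 {p : nat} : prime p -> 2 <= INR p.
Proof. by move=> pp; apply: (le_INR 2); apply/leP; exact: prime_gt1. Qed.

Lemma expn_INR (p k : nat) : INR (expn p k) = INR p ^ k.
Proof. by elim: k => [|k IH]; rewrite ?expn0 // expnS mult_INR IH. Qed.

Lemma INR_divn_bounds (a b : nat) : (0 < b)%nat ->
  INR a / INR b - 1 <= INR (a %/ b) <= INR a / INR b.
Proof.
move=> b0; have bR := INR_gt0 b0.
have r_lt : INR (a %% b) + 1 <= INR b by rewrite -S_INR; apply: le_INR; apply/leP; rewrite ltn_pmod.
have r_ge0 := pos_INR (a %% b).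
have aR : INR a = INR (a %/ b) * INR b + INR (a %% b) by rewrite {1}(divn_eq a b) plus_INR mult_INR.
have -> : INR a / INR b = INR (a %/ b) + INR (a %% b) / INR b by rewrite aR; field; lra.
have : 0 <= INR (a %% b) / INR b <= 1.
  split; first exact: Rdiv_le_0_compat.
  by apply: (Rmult_le_reg_r (INR b)) => //; rewrite /Rdiv Rmult_assoc Rinv_l; lra.
lra.
Qed.

Lemma ln_0 : ln 0 = 0.
Proof. by rewrite /ln; case: (Rlt_dec 0 0) => // h; case: (Rlt_irrefl 0 h). Qed.

Lemma ln_le_sub1 x : 0 < x -> ln x <= x - 1.
Proof. by move=> x0; have := exp_ineq1_le (ln x); rewrite exp_ln //; lra. Qed.

Lemma ln_ge0 x : 1 <= x -> 0 <= ln x.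
Proof. by move=> x1; rewrite -ln_1; apply: ln_le; lra. Qed.

Lemma ln_INR_ge0 (k : nat) : 0 <= ln (INR k).
Proof. by case: k => [|k]; [rewrite ln_0; lra | apply/ln_ge0/INR_ge1]. Qed.

Lemma ln_succ_sub_bounds x : 1 <= x -> 0 <= ln (x + 1) - ln x <= / x.
Proof.
move=> x1; split; first by have := ln_le x (x + 1); lra.
rewrite -ln_div; try lra.
apply: Rle_trans (ln_le_sub1 _ _) _; first by apply: Rdiv_lt_0_compat; lra.
by apply: Req_le; field; lra.
Qed.

Lemma ln4_le3 : ln 4 <= 3.
Proof. by have := ln_le_sub1 4; lra. Qed.

Lemma ln_sqr_le_sqrt y : 1 <= y -> ln y ^ 2 <= 16 * sqrt y.
Proof.
move=> y1; set s := sqrt (sqrt y).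
have s1 : 1 <= s.
  by rewrite /s -sqrt_1; apply: sqrt_le_1_alt; rewrite -sqrt_1; apply: sqrt_le_1_alt.
have ss : s * s = sqrt y by rewrite /s sqrt_sqrt //; apply: sqrt_pos.
have yy : sqrt y * sqrt y = y by rewrite sqrt_sqrt; lra.
have ln_y : ln y = 4 * ln s.
  have -> : y = s ^ 4 by rewrite -yy -ss /=; ring.
  by rewrite ln_pow; [rewrite /=; ring | lra].
have l0 := ln_ge0 s s1; have l1 := ln_le_sub1 s ltac:(lra).
rewrite ln_y -ss; nra.
Qed.

Lemma sum_geom_le (r : R) (J : nat) : 0 <= r < 1 ->
  \big[Rplus/0]_(1 <= k < J.+1) r ^ k <= r / (1 - r).
Proof.
move=> r01.
suff : \big[Rplus/0]_(1 <= k < J.+1) r ^ k = r / (1 - r) - r ^ J.+1 / (1 - r).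
  have : 0 <= r ^ J.+1 / (1 - r) by apply: Rdiv_le_0_compat; [apply: pow_le | ]; lra.
  lra.
elim: J => [|J IH]; first by rewrite big_geq //=; field; lra.
by rewrite sumR_nat_recr // IH /=; field; lra.
Qed.

Lemma sum_inv_sqrt_le n : \big[Rplus/0]_(1 <= k < n.+1) / sqrt (INR k) <= 2 * sqrt (INR n).
Proof.
elim: n => [|n IH]; first by rewrite big_geq //= sqrt_0; lra.
rewrite sumR_nat_recr //.
suff : / sqrt (INR n.+1) <= 2 * sqrt (INR n.+1) - 2 * sqrt (INR n) by lra.
have b0 : 0 < sqrt (INR n.+1) by apply/sqrt_lt_R0/INR_gt0.
have bb : sqrt (INR n.+1) * sqrt (INR n.+1) = INR n + 1.
  by rewrite sqrt_sqrt -?S_INR //; apply: pos_INR.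
have aa := sqrt_sqrt (INR n) (pos_INR n).
have a0 := sqrt_pos (INR n).
apply: (Rmult_le_reg_l (sqrt (INR n.+1))) => //.
by rewrite Rinv_r; [nra | lra].
Qed.

Lemma ln_prod (r : seq nat) (P : pred nat) (f : nat -> nat) :
  (forall i, P i -> (0 < f i)%nat) ->
  ln (INR (\prod_(i <- r | P i) f i)) = \big[Rplus/0]_(i <- r | P i) ln (INR (f i)).
Proof.
move=> f0.
suff [] : (0 < \prod_(i <- r | P i) f i)%nat /\
          ln (INR (\prod_(i <- r | P i) f i)) = \big[Rplus/0]_(i <- r | P i) ln (INR (f i)) by [].
apply: (big_rec2 (fun y1 y2 => (0 < y1)%nat /\ ln (INR y1) = y2)); first by rewrite ln_1.
move=> i y1 y2 Pi [y1_gt0 <-]; split; first by rewrite muln_gt0 f0.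
by rewrite mult_INR ln_mult //; apply: INR_gt0 => //; exact: f0.
Qed.

Lemma prod_prime_powers (k N : nat) : (0 < k)%nat -> (k <= N)%nat ->
  k = (\prod_(0 <= p < N.+1 | prime p) expn p (logn p k))%nat.
Proof.
move=> k0 kN; rewrite -{1}(partnT k0) (widen_partn _ kN) big_mkcond [RHS]big_mkcond.
by apply: eq_bigr => p _; case pp: (prime p); rewrite // lognE pp.
Qed.

Lemma ln_prime_decomp (k N : nat) : (0 < k)%nat -> (k <= N)%nat ->
  ln (INR k) = \big[Rplus/0]_(0 <= p < N.+1 | prime p) (INR (logn p k) * ln (INR p)).
Proof.
move=> k0 kN; rewrite {1}(prod_prime_powers _ _ k0 kN) ln_prod => [|p pp].
  by apply: eq_bigr => p pp; rewrite expn_INR ln_pow //; apply/INR_gt0/prime_gt0.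
by rewrite expn_gt0 prime_gt0.
Qed.

Lemma ln_fact_le (x : nat) : ln (INR x`!) <= INR x * ln (INR x).
Proof.
elim: x => [|x IH]; first by rewrite /= ln_1; lra.
rewrite factS mult_INR ln_mult; [|exact: INR_gt0|exact/INR_gt0/fact_gt0].
have ln_mono : ln (INR x) <= ln (INR x.+1).
  case: x IH => [|x] _; first by rewrite /= ln_0 ln_1; lra.
  by apply: ln_le; [exact: INR_gt0 | apply/le_INR/leP].
have := Rmult_le_compat_l _ _ _ (pos_INR x) ln_mono.
have -> : INR x.+1 * ln (INR x.+1) = INR x * ln (INR x.+1) + ln (INR x.+1).
  by rewrite S_INR; ring.
lra.
Qed.

Lemma ln_fact_ge (x : nat) : (1 <= x)%nat -> INR x * ln (INR x) - INR x <= ln (INR x`!).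
Proof.
elim: x => [|[|x] IH] // _; first by rewrite /= ln_1; lra.
have {}IH := IH isT.
rewrite factS mult_INR ln_mult; [|exact: INR_gt0|exact/INR_gt0/fact_gt0].
have x1 : 1 <= INR x.+1 by exact: INR_ge1.
have [_ dln] := ln_succ_sub_bounds _ x1; rewrite -S_INR in dln.
have : INR x.+1 * (ln (INR x.+2) - ln (INR x.+1)) <= 1.
  rewrite -(Rinv_r (INR x.+1)); last lra.
  by apply: Rmult_le_compat_l; lra.
move: IH dln; rewrite [INR x.+2]S_INR.
set L2 := ln (_ + 1); set L1 := ln (INR x.+1); set X := INR x.+1; nra.
Qed.

Lemma logn_fact_small p j : prime p -> (j < p)%nat -> logn p j`! = 0%nat.
Proof.
move=> pp jp; rewrite logn_fact // big_nat_cond big1 // => i /andP[/andP[i1 _] _].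
by rewrite divn_small // (leq_trans jp) // -{1}(expn1 p) leq_pexp2l // prime_gt0.
Qed.

Lemma divn_le_logn_fact p j : prime p -> (0 < j)%nat -> (j %/ p <= logn p j`!)%nat.
Proof. by move=> pp j0; rewrite logn_fact // big_ltn //= expn1 leq_addr. Qed.

Lemma logn_fact_le p x : prime p -> INR (logn p x`!) <= INR x / (INR p - 1).
Proof.
move=> pp; have p2 := INR_prime_ge2 pp.
set r := / INR p.
have r01 : 0 <= r < 1.
  split; first by apply/Rlt_le/Rinv_0_lt_compat; lra.
  by rewrite /r -Rinv_1; apply: Rinv_lt_contravar; lra.
rewrite logn_fact // INR_sum.
apply: Rle_trans (_ : \big[Rplus/0]_(1 <= k < x.+1) (INR x * r ^ k) <= _).
  apply: sumR_le => k _ _.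
  have pk0 : (0 < expn p k)%nat by rewrite expn_gt0 prime_gt0.
  apply: Rle_trans (proj2 (INR_divn_bounds x _ pk0)) _.
  by rewrite expn_INR /r pow_inv; exact: Rle_refl.
rewrite sumR_scale.
have -> : INR x / (INR p - 1) = INR x * (r / (1 - r)) by rewrite /r; field; lra.
by apply: Rmult_le_compat_l; [exact: pos_INR | exact: sum_geom_le].
Qed.

Lemma ln_fact_prime_decomp x :
  ln (INR x`!) = \big[Rplus/0]_(0 <= p < x.+1 | prime p) (INR (logn p x`!) * ln (INR p)).
Proof.
rewrite (ln_prime_decomp x`! x`!) ?fact_gt0 // (sumR_cat 0 x.+1) ?ltnS ?fact_geq //.
suff -> : \big[Rplus/0]_(x.+1 <= p < x`!.+1 | prime p) (INR (logn p x`!) * ln (INR p)) = 0.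
  by rewrite Rplus_0_r.
rewrite big_nat_cond big1 // => p /andP[/andP[xp _] pp].
by rewrite logn_fact_small // Rmult_0_l.
Qed.

Definition theta (x : nat) : R := \big[Rplus/0]_(0 <= p < x.+1 | prime p) ln (INR p).

Lemma bin_mid_le k : ('C(k.*2.+1, k) <= expn 4 k)%nat.
Proof.
have := expnDn 1 1 k.*2.+1.
under eq_bigr => i _ do rewrite !exp1n !muln1.
rewrite -(big_mkord xpredT (fun i => 'C(k.*2.+1, i))).
rewrite (@big_cat_nat _ _ _ k 0 k.*2.+2) //; last lia.
rewrite (@big_ltn _ _ _ k k.*2.+2); last lia.
rewrite (@big_ltn _ _ _ k.+1 k.*2.+2); last lia.
have -> : 'C(k.*2.+1, k.+1) = 'C(k.*2.+1, k).
  by rewrite -(bin_sub (n := k.*2.+1) (m := k)); [congr 'C(_, _) | ]; lia.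
have -> : expn 4 k = expn 2 k.*2 by rewrite -addnn expnD -expnMn.
by rewrite expnS => /=; rewrite !add1n; lia.
Qed.

Lemma bin_mid_logn_gt0 k p : prime p -> (k.+1 < p <= k.*2.+1)%nat ->
  (0 < logn p 'C(k.*2.+1, k))%nat.
Proof.
move=> pp /andP[kp p2k].
have C0 : (0 < 'C(k.*2.+1, k))%nat by rewrite bin_gt0; lia.
have kk : (k <= k.*2.+1)%nat by lia.
have := bin_fact kk; rewrite (_ : k.*2.+1 - k = k.+1)%nat; last lia.
move=> /(congr1 (logn p)).
rewrite lognM ?muln_gt0 ?fact_gt0 // lognM ?fact_gt0 //.
rewrite (logn_fact_small p k) ?(logn_fact_small p k.+1) //; last lia.
have := divn_le_logn_fact p k.*2.+1 pp isT.
have : (0 < k.*2.+1 %/ p)%nat by rewrite divn_gt0 ?prime_gt0.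
lia.
Qed.

Lemma sum_ln_primes_mid_le k :
  \big[Rplus/0]_(k.+2 <= p < k.*2.+2 | prime p) ln (INR p) <= INR k * ln 4.
Proof.
set C := 'C(k.*2.+1, k).
have C0 : (0 < C)%nat by rewrite bin_gt0; lia.
have lnC : ln (INR C) <= INR k * ln 4.
  rewrite -ln_pow; last lra.
  apply: ln_le; first exact: INR_gt0.
  by rewrite (_ : 4 = INR 4); [rewrite -expn_INR; apply/le_INR/leP/bin_mid_le | simpl; lra].
apply: Rle_trans lnC; rewrite (ln_prime_decomp C (C + k.*2.+1)) ?leq_addr //.
apply: Rle_trans (sumR_subrange_le 0 k.+2 k.*2.+2 _ prime _ isT _ _); last 2 first.
- lia.
- by move=> i _ _; apply: Rmult_le_pos; [exact: pos_INR | exact: ln_INR_ge0].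
apply: sumR_le => p /andP[kp p2k] pp.
have : 1 <= INR (logn p C) by apply/INR_ge1/bin_mid_logn_gt0; rewrite // kp; lia.
have := ln_INR_ge0 p; nra.
Qed.

Lemma theta_le x : theta x <= INR x * ln 4.
Proof.
have ln2_ge0 : 0 <= ln 2 by apply: ln_ge0; lra.
have ln2_le : ln 2 <= ln 4 by apply: ln_le; lra.
elim/ltn_ind: x => -[|[|[|x]]] IH.
- by rewrite /theta big_ltn_cond // big_geq //=; lra.
- by rewrite /theta big_ltn_cond // big_ltn_cond // big_geq //=; lra.
- rewrite /theta big_ltn_cond // big_ltn_cond // big_ltn_cond // big_geq //= Rplus_0_r.
  by rewrite (_ : 1 + 1 = 2); lra.
case: (boolP (odd x)) => [x_odd | x_even].
- have np : prime x.+3 = false.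
    by apply/negbTE/negP => pp; case: (even_prime pp) => //; rewrite /= x_odd.
  rewrite /theta sumR_nat_recr_cond // np Rplus_0_r.
  by have := IH x.+2 (ltnSn _); rewrite /theta !S_INR; lra.
- have [k xk] : exists k, x.+3 = k.*2.+1.
    by exists (x.+2)./2; rewrite -[in LHS](odd_double_half x.+2) /= (negbTE x_even).
  rewrite xk /theta (sumR_cat 0 k.+2) ?ltnS; last lia.
  have := IH k.+1 ltac:(lia); have := sum_ln_primes_mid_le k.
  have -> : INR k.*2.+1 = INR k.+1 + INR k by rewrite -plus_INR; congr INR; lia.
  rewrite /theta; lra.
Qed.

Definition lnsq_series_term (j : nat) : R := (1 + ln (INR j) ^ 2) / (INR j * (INR j - 1)).

Definition lnsq_majorant (x : R) : R := (ln x ^ 2 + 4 * ln x + 9) / x.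

Lemma lnsq_majorant_step (x : nat) : (1 <= x)%nat ->
  lnsq_series_term x.+1 <= lnsq_majorant (INR x) - lnsq_majorant (INR x.+1).
Proof.
move=> x1; have X1 := INR_ge1 x1.
have [du dv] := ln_succ_sub_bounds _ X1; rewrite -S_INR in du dv.
rewrite /lnsq_series_term /lnsq_majorant.
set u := ln (INR x) in du dv *; set v := ln (INR x.+1) in du dv *.
have u0 : 0 <= u by exact: ln_ge0.
have xdv : INR x * (v - u) <= 1.
  by rewrite -(Rinv_r (INR x)); [apply: Rmult_le_compat_l; lra | lra].
rewrite S_INR; set X := INR x in X1 xdv *.
have key : 1 + v ^ 2 <= (X + 1) * (u ^ 2 + 4 * u + 9) - X * (v ^ 2 + 4 * v + 9).
  have -> : (X + 1) * (u ^ 2 + 4 * u + 9) - X * (v ^ 2 + 4 * v + 9)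
         = (v ^ 2 + 4 * v + 9) - (X + 1) * (v - u) * (u + v + 4) by ring.
  have : (X + 1) * (v - u) * (u + v + 4) <= 2 * (2 * v + 4) by apply: Rmult_le_compat; nra.
  nra.
apply: (Rmult_le_reg_r ((X + 1) * X)); first nra.
have -> : (1 + v ^ 2) / ((X + 1) * (X + 1 - 1)) * ((X + 1) * X) = 1 + v ^ 2 by field; lra.
have -> : ((u ^ 2 + 4 * u + 9) / X - (v ^ 2 + 4 * v + 9) / (X + 1)) * ((X + 1) * X)
   = (X + 1) * (u ^ 2 + 4 * u + 9) - X * (v ^ 2 + 4 * v + 9) by field; lra.
exact: key.
Qed.

Lemma lnsq_series_le (x : nat) : \big[Rplus/0]_(2 <= j < x.+1) lnsq_series_term j <= 9.
Proof.
suff telescope : forall y, (1 <= y)%nat ->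
    \big[Rplus/0]_(2 <= j < y.+1) lnsq_series_term j <= 9 - lnsq_majorant (INR y).
  case: x => [|x]; first by rewrite big_geq //; lra.
  have X1 := INR_ge1 (isT : (1 <= x.+1)%nat); have := ln_ge0 _ X1.
  have := telescope x.+1 isT; rewrite /lnsq_majorant.
  have : 0 <= (ln (INR x.+1) ^ 2 + 4 * ln (INR x.+1) + 9) / INR x.+1.
    by apply: Rdiv_le_0_compat; nra.
  lra.
elim=> [|[|y] IH] // _.
  by rewrite big_geq // /lnsq_majorant /= ln_1; lra.
rewrite sumR_nat_recr //.
by have := IH isT; have := lnsq_majorant_step y.+1 isT; lra.
Qed.

Lemma sum_le_lnsq_series (x : nat) (F : nat -> R) :
  (forall j, (2 <= j)%nat -> F j <= lnsq_series_term j) ->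
  \big[Rplus/0]_(2 <= j < x.+1) F j <= 9.
Proof.
move=> F_le; apply: Rle_trans (lnsq_series_le x).
by apply: sumR_le => j /andP[j2 _] _; exact: F_le.
Qed.

Lemma sum_primes_le_lnsq_series (x : nat) (F : nat -> R) :
  (forall j, (2 <= j)%nat -> 0 <= F j <= lnsq_series_term j) ->
  \big[Rplus/0]_(0 <= p < x.+1 | prime p) F p <= 9.
Proof.
move=> F_bd; case: x => [|x]; first by rewrite big_ltn_cond // big_geq //=; lra.
rewrite big_ltn_cond // big_ltn_cond //=.
apply: Rle_trans (sumR_filter_le _ _ _ _ _) (sum_le_lnsq_series _ _ _) => j.
  by case/andP=> j2 _; case: (F_bd j j2).
by case/F_bd.
Qed.

Definition mertens (x : nat) : R := \big[Rplus/0]_(0 <= p < x.+1 | prime p) (ln (INR p) / INR p).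

Lemma mertens_le x : (1 <= x)%nat -> mertens x <= ln (INR x) + ln 4.
Proof.
move=> x1; have X1 := INR_ge1 x1.
have legendre : INR x * mertens x - theta x <= ln (INR x`!).
  rewrite ln_fact_prime_decomp /mertens /theta -sumR_scale -sumR_sub.
  apply: sumR_le => p _ pp; have p2 := INR_prime_ge2 pp.
  have [xp _] := INR_divn_bounds x p (prime_gt0 pp).
  have : INR (x %/ p) <= INR (logn p x`!) by apply/le_INR/leP/divn_le_logn_fact.
  have := ln_INR_ge0 p.
  have -> : INR x * (ln (INR p) / INR p) - ln (INR p) = (INR x / INR p - 1) * ln (INR p).
    by field; lra.
  nra.
have := ln_fact_le x; have := theta_le x.
move=> th fact; apply: (Rmult_le_reg_l (INR x)); lra.
Qed.

Lemma mertens_ge x : (1 <= x)%nat -> ln (INR x) - 10 <= mertens x.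
Proof.
move=> x1; have X1 := INR_ge1 x1.
set S := \big[Rplus/0]_(0 <= p < x.+1 | prime p) (ln (INR p) / (INR p * (INR p - 1))).
have S_le : S <= 9.
  apply: sum_primes_le_lnsq_series => j j2; have J2 : 2 <= INR j by apply/(le_INR 2)/leP.
  have := ln_INR_ge0 j; rewrite /lnsq_series_term /Rdiv => l0.
  have d0 : 0 < / (INR j * (INR j - 1)) by apply: Rinv_0_lt_compat; nra.
  by split; [|apply: Rmult_le_compat_r]; nra.
have legendre : ln (INR x`!) <= INR x * (mertens x + S).
  rewrite ln_fact_prime_decomp /mertens /S -sumR_add -sumR_scale.
  apply: sumR_le => p _ pp; have p2 := INR_prime_ge2 pp.
  have -> : INR x * (ln (INR p) / INR p + ln (INR p) / (INR p * (INR p - 1)))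
          = (INR x / (INR p - 1)) * ln (INR p) by field; lra.
  by apply: Rmult_le_compat_r; [exact: ln_INR_ge0 | exact: logn_fact_le].
have := ln_fact_ge x x1.
move=> fact; apply: (Rmult_le_reg_l (INR x)); first lra.
by rewrite Rmult_minus_distr_l; nra.
Qed.

Lemma Rabs_mertens_sub_ln_le x : (1 <= x)%nat -> Rabs (mertens x - ln (INR x)) <= 10.
Proof.
move=> x1; have := mertens_le x x1; have := mertens_ge x x1; have := ln4_le3.
by move=> *; apply: Rabs_le; lra.
Qed.

Definition mertens2 (x : nat) : R :=
  \big[Rplus/0]_(0 <= p < x.+1 | prime p) (ln (INR p) ^ 2 / INR p).

(* Abel summation: [mertens2] grows by [ln x] times the growth of [mertens], so this
   remainder only moves by [O(ln (x + 1) - ln x)] at each step. *)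
Definition mertens2_remainder (x : nat) : R :=
  mertens2 x - ln (INR x) ^ 2 / 2 - (mertens x - ln (INR x)) * ln (INR x).

Lemma mertens2_remainder_step x :
  mertens2_remainder x.+1 - mertens2_remainder x =
  (ln (INR x.+1) - ln (INR x)) ^ 2 / 2 - (mertens x - ln (INR x)) * (ln (INR x.+1) - ln (INR x)).
Proof.
rewrite /mertens2_remainder /mertens2 /mertens !(sumR_nat_recr_cond 0 x.+1) //.
have : INR x.+1 <> 0 by apply: not_0_INR.
by case: (prime x.+1) => ?; field.
Qed.

Lemma Rabs_mertens2_remainder_le x : (1 <= x)%nat ->
  Rabs (mertens2_remainder x) <= 21 / 2 * ln (INR x).
Proof.
elim: x => [|[|x] IH] // _.
  rewrite /mertens2_remainder /mertens2 /= ln_1 big_ltn_cond // big_ltn_cond // big_geq //=.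
  by match goal with |- Rabs ?e <= _ => have -> : e = 0 by field end; rewrite Rabs_R0; lra.
have {}IH := IH isT.
have X1 := INR_ge1 (isT : (1 <= x.+1)%nat).
have [d0 d_le] := ln_succ_sub_bounds _ X1; rewrite -S_INR in d0 d_le.
have d1 : ln (INR x.+2) - ln (INR x.+1) <= 1.
  have : / INR x.+1 <= 1 by rewrite -Rinv_1; apply: Rinv_le_contravar; lra.
  lra.
have E := Rabs_mertens_sub_ln_le x.+1 isT.
have step := mertens2_remainder_step x.+1.
set D := ln (INR x.+2) - ln (INR x.+1) in d0 d1 step *.
set e := mertens x.+1 - ln (INR x.+1) in E step.
have step_le : Rabs (mertens2_remainder x.+2 - mertens2_remainder x.+1) <= 21 / 2 * D.
  rewrite step; apply: Rle_trans (Rabs_triang _ _) _.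
  rewrite Rabs_Ropp Rabs_mult (Rabs_right D) ?(Rabs_right (D ^ 2 / 2)); try (apply: Rle_ge; nra).
  by have := Rmult_le_compat_r D _ _ d0 E; nra.
have := Rabs_triang (mertens2_remainder x.+1) (mertens2_remainder x.+2 - mertens2_remainder x.+1).
rewrite Rplus_minus /D in step_le *; lra.
Qed.

Lemma Rabs_mertens2_sub_le x : (1 <= x)%nat ->
  Rabs (mertens2 x - ln (INR x) ^ 2 / 2) <= 21 * ln (INR x).
Proof.
move=> x1; have R_le := Rabs_mertens2_remainder_le x x1.
have E := Rabs_mertens_sub_ln_le x x1.
have l0 := ln_ge0 _ (INR_ge1 x1).
have -> : mertens2 x - ln (INR x) ^ 2 / 2 =
          mertens2_remainder x + (mertens x - ln (INR x)) * ln (INR x).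
  by rewrite /mertens2_remainder; ring.
apply: Rle_trans (Rabs_triang _ _) _.
rewrite Rabs_mult (Rabs_right (ln (INR x))); last lra.
nra.
Qed.

Section UniformMoments.

Variable n : nat.

Lemma unif_mean_ext (X Y : nat -> R) : (forall k, (1 <= k <= n)%nat -> X k = Y k) ->
  unif_mean n X = unif_mean n Y.
Proof.
by move=> XY; rewrite /unif_mean; congr Rdiv; apply: eq_big_nat => k /andP[k1 kn]; apply: XY; lia.
Qed.

Lemma unif_var_ext (X Y : nat -> R) : (forall k, (1 <= k <= n)%nat -> X k = Y k) ->
  unif_var n X = unif_var n Y.
Proof.
by move=> XY; rewrite /unif_var (unif_mean_ext _ _ XY); apply: unif_mean_ext => k /XY ->.
Qed.

Lemma unif_meanD (X Y : nat -> R) :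
  unif_mean n (fun k => X k + Y k) = unif_mean n X + unif_mean n Y.
Proof. by rewrite /unif_mean sumR_add /Rdiv; ring. Qed.

Lemma unif_meanB (X Y : nat -> R) :
  unif_mean n (fun k => X k - Y k) = unif_mean n X - unif_mean n Y.
Proof. by rewrite /unif_mean sumR_sub /Rdiv; ring. Qed.

Lemma unif_meanZ (c : R) (X : nat -> R) : unif_mean n (fun k => c * X k) = c * unif_mean n X.
Proof. by rewrite /unif_mean sumR_scale /Rdiv; ring. Qed.

Lemma unif_mean_sum (a b : nat) (P : pred nat) (F : nat -> nat -> R) :
  unif_mean n (fun k => \big[Rplus/0]_(a <= p < b | P p) F p k) =
  \big[Rplus/0]_(a <= p < b | P p) unif_mean n (F p).
Proof. by rewrite /unif_mean exchange_big_nat /Rdiv big_distrl. Qed.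

Hypothesis n_gt0 : (0 < n)%nat.

Lemma unif_mean_cst (c : R) : unif_mean n (fun => c) = c.
Proof.
have n0 := INR_gt0 n_gt0.
by rewrite /unif_mean sumR_const subn1 /=; field; lra.
Qed.

Lemma unif_mean_le (X Y : nat -> R) : (forall k, (1 <= k <= n)%nat -> X k <= Y k) ->
  unif_mean n X <= unif_mean n Y.
Proof.
move=> XY; apply: Rmult_le_compat_r; first exact/Rlt_le/Rinv_0_lt_compat/INR_gt0.
by apply: sumR_le => k kn _; apply: XY; lia.
Qed.

Lemma unif_varE (X : nat -> R) :
  unif_var n X = unif_mean n (fun k => X k ^ 2) - unif_mean n X ^ 2.
Proof.
rewrite /unif_var; set mu := unif_mean n X.
rewrite (unif_mean_ext (fun k => Rsqr (X k - mu)) (fun k => X k ^ 2 + ((-2 * mu) * X k + mu ^ 2))).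
  by rewrite !unif_meanD unif_meanZ unif_mean_cst -/mu; ring.
by move=> k _; rewrite /Rsqr; ring.
Qed.

Lemma unif_var_le_mean_sqr (X : nat -> R) (c : R) :
  unif_var n X <= unif_mean n (fun k => (X k - c) ^ 2).
Proof.
rewrite unif_varE (unif_mean_ext (fun k => (X k - c) ^ 2)
  (fun k => X k ^ 2 + ((-2 * c) * X k + c ^ 2))); last by move=> k _; ring.
rewrite !unif_meanD unif_meanZ unif_mean_cst.
by have := pow2_ge_0 (unif_mean n X - c); lra.
Qed.

Lemma unif_var_ge0 (X : nat -> R) : 0 <= unif_var n X.
Proof.
rewrite -(unif_mean_cst 0); apply: unif_mean_le => k _; exact: Rle_0_sqr.
Qed.

Lemma unif_varB_bounds (A B : nat -> R) (eps : R) : 0 < eps ->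
  (1 - eps) * unif_var n B - / eps * unif_var n A <= unif_var n (fun k => A k - B k) <=
  (1 + eps) * unif_var n B + (1 + / eps) * unif_var n A.
Proof.
move=> eps0; have ieps0 : 0 < / eps by exact: Rinv_0_lt_compat.
have amgm a b : 2 * a * b <= eps * b ^ 2 + / eps * a ^ 2.
  apply: (Rmult_le_reg_l eps) => //.
  have -> : eps * (eps * b ^ 2 + / eps * a ^ 2) = eps ^ 2 * b ^ 2 + a ^ 2 by field; lra.
  by have := pow2_ge_0 (eps * b - a); nra.
rewrite /unif_var unif_meanB; split.
- rewrite -!unif_meanZ -unif_meanB; apply: unif_mean_le => k _.
  set a := A k - unif_mean n A; set b := B k - unif_mean n B.
  by have := amgm a b; rewrite /Rsqr (_ : A k - B k - _ = a - b); [nra | rewrite /a /b; ring].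
- rewrite -!unif_meanZ -unif_meanD; apply: unif_mean_le => k _.
  set a := A k - unif_mean n A; set b := B k - unif_mean n B.
  by have := amgm (- a) b; rewrite /Rsqr (_ : A k - B k - _ = a - b); [nra | rewrite /a /b; ring].
Qed.

End UniformMoments.

Definition dvd_ind (d k : nat) : R := if (d %| k)%nat then 1 else 0.

Definition dvd_freq (n d : nat) : R := INR (n %/ d) / INR n.

Definition ln_rad_upto (x k : nat) : R :=
  \big[Rplus/0]_(0 <= p < x.+1 | prime p) (ln (INR p) * dvd_ind p k).

Lemma dvd_indM p q k : dvd_ind p k * dvd_ind q k = dvd_ind (lcmn p q) k.
Proof. by rewrite /dvd_ind dvdn_lcm; case: (p %| k)%nat; case: (q %| k)%nat => /=; ring. Qed.

Lemma unif_mean_dvd_ind n d : (0 < d)%nat -> unif_mean n (dvd_ind d) = dvd_freq n d.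
Proof.
move=> d0; rewrite /unif_mean /dvd_freq; congr Rdiv.
elim: n => [|n IH]; first by rewrite big_geq // div0n.
rewrite sumR_nat_recr // IH divnS // plus_INR /dvd_ind.
by case: (d %| n.+1)%nat => /=; lra.
Qed.

Lemma dvd_freq_bounds n d : (0 < n)%nat -> (0 < d)%nat ->
  0 <= dvd_freq n d /\ / INR d - / INR n <= dvd_freq n d <= / INR d.
Proof.
move=> n0 d0; have N0 := INR_gt0 n0; have D0 := INR_gt0 d0.
have [lo hi] := INR_divn_bounds n d d0.
have -> : / INR d = (INR n / INR d) / INR n by field; lra.
have -> : / INR n = 1 / INR n by field; lra.
have iN0 : 0 <= / INR n by exact/Rlt_le/Rinv_0_lt_compat.
rewrite /dvd_freq /Rdiv; split; first exact/Rmult_le_pos/iN0/pos_INR.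
by split; rewrite -?Rmult_minus_distr_r; apply: Rmult_le_compat_r; lra.
Qed.

Lemma unif_var_ln_rad_upto n x : (0 < n)%nat ->
  unif_var n (ln_rad_upto x) =
  \big[Rplus/0]_(0 <= p < x.+1 | prime p) \big[Rplus/0]_(0 <= q < x.+1 | prime q)
    (ln (INR p) * ln (INR q) * (dvd_freq n (lcmn p q) - dvd_freq n p * dvd_freq n q)).
Proof.
move=> n0; rewrite unif_varE //.
have -> : unif_mean n (ln_rad_upto x) =
    \big[Rplus/0]_(0 <= p < x.+1 | prime p) (ln (INR p) * dvd_freq n p).
  rewrite unif_mean_sum; apply: eq_bigr => p pp.
  by rewrite unif_meanZ unif_mean_dvd_ind // prime_gt0.
have -> : unif_mean n (fun k => ln_rad_upto x k ^ 2) =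
    \big[Rplus/0]_(0 <= p < x.+1 | prime p) \big[Rplus/0]_(0 <= q < x.+1 | prime q)
      (ln (INR p) * ln (INR q) * dvd_freq n (lcmn p q)).
  rewrite (unif_mean_ext n _ (fun k => \big[Rplus/0]_(0 <= p < x.+1 | prime p)
      \big[Rplus/0]_(0 <= q < x.+1 | prime q) (ln (INR p) * ln (INR q) * dvd_ind (lcmn p q) k))).
    rewrite unif_mean_sum; apply: eq_bigr => p pp; rewrite unif_mean_sum; apply: eq_bigr => q pq.
    by rewrite unif_meanZ unif_mean_dvd_ind // lcmn_gt0 !prime_gt0.
  move=> k _; rewrite /ln_rad_upto sumR_sqr; apply: eq_bigr => p _; apply: eq_bigr => q _.
  by rewrite -dvd_indM; ring.
rewrite sumR_sqr -sumR_sub; apply: eq_bigr => p _; rewrite -sumR_sub.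
by apply: eq_bigr => q _; ring.
Qed.

Lemma dvd_freq_cov_err n p q : (0 < n)%nat -> prime p -> prime q ->
  Rabs ((dvd_freq n (lcmn p q) - dvd_freq n p * dvd_freq n q) -
        (/ INR (lcmn p q) - / INR p * / INR q)) <= 3 / INR n.
Proof.
move=> n0 pp pq.
have pq0 : (0 < lcmn p q)%nat by rewrite lcmn_gt0 !prime_gt0.
have [l0 [l1 l2]] := dvd_freq_bounds n _ n0 pq0.
have [p0 [p1 p2]] := dvd_freq_bounds n p n0 (prime_gt0 pp).
have [q0 [q1 q2]] := dvd_freq_bounds n q n0 (prime_gt0 pq).
have inv_le1 r : prime r -> 0 < / INR r <= 1.
  move=> pr; have r2 := INR_prime_ge2 pr.
  by split; [apply: Rinv_0_lt_compat | rewrite -Rinv_1; apply: Rinv_le_contravar]; lra.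
have [P0 P1] := inv_le1 p pp; have [Q0 Q1] := inv_le1 q pq.
have -> : 3 / INR n = 3 * / INR n by [].
have e : / INR p * / INR q - dvd_freq n p * dvd_freq n q =
         / INR p * (/ INR q - dvd_freq n q) + dvd_freq n q * (/ INR p - dvd_freq n p) by ring.
have t1 : 0 <= / INR p * (/ INR q - dvd_freq n q) <= / INR n.
  split; first by apply: Rmult_le_pos; lra.
  have : / INR p * (/ INR q - dvd_freq n q) <= 1 * (/ INR q - dvd_freq n q).
    by apply: Rmult_le_compat_r; lra.
  lra.
have t2 : 0 <= dvd_freq n q * (/ INR p - dvd_freq n p) <= / INR n.
  split; first by apply: Rmult_le_pos; lra.
  have : dvd_freq n q * (/ INR p - dvd_freq n p) <= 1 * (/ INR p - dvd_freq n p).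
    by apply: Rmult_le_compat_r; lra.
  lra.
apply: Rabs_le; lra.
Qed.

Lemma lcmn_prime_neq p q : prime p -> prime q -> p <> q -> lcmn p q = (p * q)%nat.
Proof.
move=> pp pq pq_neq.
have /eqP cop : coprime p q by rewrite prime_coprime // dvdn_prime2 //; apply/eqP.
by have := muln_lcm_gcd p q; rewrite cop muln1.
Qed.

(* [lcmn p q = p * q] for distinct primes, so only the diagonal terms survive. *)
Lemma sum_cov_limit x :
  \big[Rplus/0]_(0 <= p < x.+1 | prime p) \big[Rplus/0]_(0 <= q < x.+1 | prime q)
    (ln (INR p) * ln (INR q) * (/ INR (lcmn p q) - / INR p * / INR q)) =
  mertens2 x - \big[Rplus/0]_(0 <= p < x.+1 | prime p) (ln (INR p) ^ 2 / INR p ^ 2).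
Proof.
rewrite /mertens2 -sumR_sub big_nat_cond [RHS]big_nat_cond.
apply: eq_bigr => p /andP[px pp]; have p2 := INR_prime_ge2 pp.
rewrite (sumR_single _ _ _ _ p) //.
  have -> : lcmn p p = p by apply/lcmn_idPl.
  by field; lra.
move=> q pq qp; rewrite lcmn_prime_neq // ?mult_INR; last by apply: nesym.
by rewrite Rinv_mult; ring.
Qed.

Lemma lnsq_div_sq_le_series_term j : (2 <= j)%nat ->
  0 <= ln (INR j) ^ 2 / INR j ^ 2 <= lnsq_series_term j.
Proof.
move=> j2; have J2 : 2 <= INR j by apply/(le_INR 2)/leP.
have l0 := pow2_ge_0 (ln (INR j)).
have i0 : 0 < / INR j ^ 2 by apply: Rinv_0_lt_compat; nra.
rewrite /lnsq_series_term /Rdiv; split; first by apply: Rmult_le_pos; lra.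
apply: Rmult_le_compat; [lra | lra | lra | apply: Rinv_le_contravar; nra].
Qed.

Lemma Rabs_unif_var_ln_rad_upto_sub_le n x : (0 < n)%nat ->
  Rabs (unif_var n (ln_rad_upto x) -
    \big[Rplus/0]_(0 <= p < x.+1 | prime p) \big[Rplus/0]_(0 <= q < x.+1 | prime q)
      (ln (INR p) * ln (INR q) * (/ INR (lcmn p q) - / INR p * / INR q)))
  <= 3 / INR n * theta x ^ 2.
Proof.
move=> n0; rewrite unif_var_ln_rad_upto // -sumR_sub.
apply: Rle_trans (Rabs_sumR_le _ _ _ _) _.
rewrite /theta sumR_sqr -sumR_scale; apply: sumR_le => p _ pp.
rewrite -sumR_sub; apply: Rle_trans (Rabs_sumR_le _ _ _ _) _.
rewrite -sumR_scale; apply: sumR_le => q _ pq.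
have lpq : 0 <= ln (INR p) * ln (INR q) by apply: Rmult_le_pos; exact: ln_INR_ge0.
rewrite -Rmult_minus_distr_l Rabs_mult (Rabs_right _ (Rle_ge _ _ lpq)).
by have := Rmult_le_compat_l _ _ _ lpq (dvd_freq_cov_err n p q n0 pp pq); lra.
Qed.

Lemma Rabs_unif_var_ln_rad_upto_sub_mertens2_le n m : (0 < n)%nat -> (m * m <= n)%nat ->
  Rabs (unif_var n (ln_rad_upto m) - mertens2 m) <= 36.
Proof.
move=> n0 mn; have N0 := INR_gt0 n0.
have E := Rabs_unif_var_ln_rad_upto_sub_le n m n0; rewrite sum_cov_limit in E.
have S := sum_primes_le_lnsq_series m _ lnsq_div_sq_le_series_term.
have S0 : 0 <= \big[Rplus/0]_(0 <= p < m.+1 | prime p) (ln (INR p) ^ 2 / INR p ^ 2).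
  by apply: sumR_ge0 => p _ pp; case: (lnsq_div_sq_le_series_term p (prime_gt1 pp)).
have th_sq : 3 / INR n * theta m ^ 2 <= 27.
  have th0 : 0 <= theta m by apply: sumR_ge0 => p _ _; exact: ln_INR_ge0.
  have th_le : theta m <= 3 * INR m by have := theta_le m; have := ln4_le3; have := pos_INR m; nra.
  have : INR m * INR m <= INR n by rewrite -mult_INR; apply/le_INR/leP.
  move=> mn_R; apply: (Rmult_le_reg_l (INR n)) => //.
  have -> : INR n * (3 / INR n * theta m ^ 2) = 3 * theta m ^ 2 by field; lra.
  nra.
by move: E => /Rabs_le_between E; apply: Rabs_le; lra.
Qed.

Lemma square_squarefree_decomp k : (0 < k)%nat -> exists d e, [/\ (0 < d)%nat, (0 < e)%nat,
  k = (d * d * e)%nat & forall p, prime p -> (logn p e <= 1)%nat].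
Proof.
move=> k0.
pose P d := (0 < d)%nat && (d * d %| k)%nat.
have P1 : exists d, P d by exists 1%nat; rewrite /P /= mul1n dvd1n.
have P_le d : P d -> (d <= k)%nat.
  by case/andP=> d0 dk; apply: leq_trans (dvdn_leq k0 dk); rewrite leq_pmulr.
case: (ex_maxnP P1 P_le) => d /andP[d0 dk] d_max.
have dd0 : (0 < d * d)%nat by rewrite muln_gt0 d0.
have e0 : (0 < k %/ (d * d))%nat by rewrite divn_gt0 // dvdn_leq.
exists d, (k %/ (d * d))%nat; split => //; first by rewrite mulnC divnK.
move=> p pp; rewrite leqNgt; apply/negP => p2e.
have : P (d * p)%nat.
  rewrite /P muln_gt0 d0 prime_gt0 //= -(divnK dk).
  rewrite (_ : d * p * (d * p) = expn p 2 * (d * d))%nat; last by rewrite mulnACA mulnC expnS expn1.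
  by apply: dvdn_mul; rewrite // pfactor_dvdn.
by move/d_max; rewrite -{2}(muln1 d) leq_pmul2l // leqNgt prime_gt1.
Qed.

Lemma ln_rad_upto_le_ln n k : (1 <= k <= n)%nat -> ln_rad_upto n k <= ln (INR k).
Proof.
case/andP=> k0 kn; rewrite (ln_prime_decomp k n) //.
apply: sumR_le => p _ pp; rewrite Rmult_comm; apply: Rmult_le_compat_r; first exact: ln_INR_ge0.
rewrite /dvd_ind; case: (boolP (p %| k)%nat) => pk; last exact: pos_INR.
by apply: INR_ge1; rewrite logn_gt0 mem_primes pp k0.
Qed.

Lemma ln_sub_ln_rad_upto_le n k : (1 <= k <= n)%nat -> exists d,
  [/\ (1 <= d <= n)%nat, (d * d %| k)%nat & ln (INR k) - ln_rad_upto n k <= 2 * ln (INR d)].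
Proof.
case/andP=> k0 kn; have [d [e [d0 e0 kde e_sqfree]]] := square_squarefree_decomp k k0.
have ek : (e <= k)%nat by rewrite kde leq_pmull // muln_gt0 d0.
exists d; split; [|by rewrite kde dvdn_mulr|].
  by rewrite d0 (leq_trans _ kn) // (leq_trans _ (_ : d * d <= k)%nat) ?leq_pmulr // kde leq_pmulr.
have -> : ln (INR k) = 2 * ln (INR d) + ln (INR e).
  have [D0 E0] := (INR_gt0 d0, INR_gt0 e0).
  by rewrite kde !mult_INR !ln_mult //; [ring | apply: Rmult_lt_0_compat].
suff : ln (INR e) <= ln_rad_upto n k by lra.
rewrite (ln_prime_decomp e n) ?(leq_trans ek) //.
apply: sumR_le => p _ pp; rewrite Rmult_comm; apply: Rmult_le_compat_l; first exact: ln_INR_ge0.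
have := e_sqfree p pp; case pe: (logn p e) => [|[|//]] _; rewrite /dvd_ind.
  by case: (p %| k)%nat; rewrite /=; lra.
have pk : (p %| k)%nat.
  have : (0 < logn p e)%nat by rewrite pe.
  by rewrite kde logn_gt0 mem_primes => /and3P[_ _ pe_dvd]; apply: dvdn_mull.
by rewrite pk /=; lra.
Qed.

Lemma unif_mean_ln_ratio_sqr_le n : (0 < n)%nat ->
  unif_mean n (fun k => (ln (INR n) - ln (INR k)) ^ 2) <= 32.
Proof.
move=> n0; have N0 := INR_gt0 n0.
have sn0 : 0 < sqrt (INR n) by apply: sqrt_lt_R0.
apply: Rle_trans (_ : unif_mean n (fun k => 16 * sqrt (INR n) * / sqrt (INR k)) <= _).
  apply: unif_mean_le => // k /andP[k1 kn]; have K0 := INR_gt0 k1.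
  have nk1 : 1 <= INR n / INR k.
    apply: (Rmult_le_reg_r (INR k)) => //.
    by rewrite /Rdiv Rmult_assoc Rinv_l ?Rmult_1_r ?Rmult_1_l; [apply/le_INR/leP | lra].
  rewrite -ln_div //; apply: Rle_trans (ln_sqr_le_sqrt _ nk1) _.
  by rewrite sqrt_div; [apply: Req_le; rewrite /Rdiv; ring | lra | exact: K0].
rewrite unif_meanZ /unif_mean.
have sum_le := sum_inv_sqrt_le n.
have snn : sqrt (INR n) * sqrt (INR n) = INR n by apply: sqrt_sqrt; lra.
apply: (Rmult_le_reg_l (INR n)) => //.
have -> : INR n * (16 * sqrt (INR n) * (\big[Rplus/0]_(1 <= k < n.+1) / sqrt (INR k) / INR n))
  = 16 * sqrt (INR n) * \big[Rplus/0]_(1 <= k < n.+1) / sqrt (INR k) by field; lra.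
nra.
Qed.

Definition ln_sqr_square_divisors (n k : nat) : R :=
  \big[Rplus/0]_(1 <= d < n.+1) (ln (INR d) ^ 2 * dvd_ind (d * d) k).

Lemma unif_mean_ln_sqr_square_divisors_le n : (0 < n)%nat ->
  unif_mean n (ln_sqr_square_divisors n) <= 9.
Proof.
move=> n0; rewrite /ln_sqr_square_divisors unif_mean_sum (sumR_cat 1 2) ?ltnS //.
rewrite big_nat1 unif_meanZ ln_1 pow_i; last lia.
rewrite Rmult_0_l Rplus_0_l.
apply: sum_le_lnsq_series => d d2.
have dd0 : (0 < d * d)%nat by rewrite muln_gt0; lia.
have [_ [_ f_le]] := dvd_freq_bounds n _ n0 dd0.
rewrite unif_meanZ unif_mean_dvd_ind //.
apply: Rle_trans (proj2 (lnsq_div_sq_le_series_term d d2)).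
by apply: Rmult_le_compat_l; [exact: pow2_ge_0 | rewrite /= Rmult_1_r -mult_INR].
Qed.

Lemma unif_var_ln_rad_upto_le n : (0 < n)%nat -> unif_var n (ln_rad_upto n) <= 136.
Proof.
move=> n0.
apply: Rle_trans (unif_var_le_mean_sqr n n0 _ (ln (INR n))) _.
apply: Rle_trans (_ : unif_mean n (fun k =>
  2 * (ln (INR n) - ln (INR k)) ^ 2 + 8 * ln_sqr_square_divisors n k) <= _).
  apply: unif_mean_le => // k kn.
  have [d [/andP[d1 dn] ddk rad_ge]] := ln_sub_ln_rad_upto_le n k kn.
  have rad_le := ln_rad_upto_le_ln n k kn.
  have ld : 0 <= ln (INR d) by exact/ln_ge0/INR_ge1.
  have sqr_div_ge : ln (INR d) ^ 2 <= ln_sqr_square_divisors n k.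
    have := sumR_ge_term 1 n.+1 xpredT (fun j => ln (INR j) ^ 2 * dvd_ind (j * j) k) d.
    rewrite /ln_sqr_square_divisors /dvd_ind ddk Rmult_1_r; apply; rewrite ?d1 //.
    move=> i _ _; case: (i * i %| k)%nat; rewrite ?Rmult_1_r ?Rmult_0_r; [exact: pow2_ge_0 | lra].
  have : (ln (INR k) - ln_rad_upto n k) ^ 2 <= 4 * ln (INR d) ^ 2.
    have rad0 : 0 <= ln (INR k) - ln_rad_upto n k by lra.
    by have := Rmult_le_compat _ _ _ _ rad0 rad0 rad_ge rad_ge; rewrite /=; lra.
  have := pow2_ge_0 ((ln (INR n) - ln (INR k)) - (ln (INR k) - ln_rad_upto n k)).
  by rewrite /=; nra.
rewrite unif_meanD !unif_meanZ.
by have := unif_mean_ln_ratio_sqr_le n n0; have := unif_mean_ln_sqr_square_divisors_le n n0; lra.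
Qed.

Lemma ln_utilde n m k : (m <= n)%nat -> (1 <= k)%nat ->
  ln (INR (utilde n m k)) = ln_rad_upto n k - ln_rad_upto m k.
Proof.
move=> mn k1; rewrite /utilde ln_prod; last first.
  by move=> p pp; case: (0 < logn p k)%nat; rewrite //= Nat.mul_1_r prime_gt0.
rewrite /ln_rad_upto (sumR_cat 0 m.+1 n.+1) ?ltnS //; ring_simplify.
apply: eq_bigr => p pp; rewrite pow_INR ln_pow; last exact/INR_gt0/prime_gt0.
rewrite Rmult_comm /dvd_ind logn_gt0 mem_primes pp k1 /=.
by case: (p %| k)%nat; rewrite /=; ring.
Qed.

Lemma Rabs_unif_var_ln_rad_upto_sub_le_ln n m : (1 <= m)%nat -> (m * m <= n)%nat ->
  Rabs (unif_var n (ln_rad_upto m) - ln (INR m) ^ 2 / 2) <= 21 * ln (INR m) + 36.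
Proof.
move=> m1 mn; have n0 : (0 < n)%nat by apply: leq_trans mn; rewrite muln_gt0 m1.
have := Rabs_unif_var_ln_rad_upto_sub_mertens2_le n m n0 mn.
have := Rabs_mertens2_sub_le m m1.
have -> : unif_var n (ln_rad_upto m) - ln (INR m) ^ 2 / 2 =
  (unif_var n (ln_rad_upto m) - mertens2 m) + (mertens2 m - ln (INR m) ^ 2 / 2) by ring.
by move=> *; apply: Rle_trans (Rabs_triang _ _) _; lra.
Qed.

(* [L >= 114 / d] gives [21 L + 36 <= d L^2 / 2], and [L >= 272 (1 + 1/d) / d] gives
   [(1 + 1/d) 136 <= d L^2 / 2]. *)
Definition log_threshold (d : R) : R := 1 + 114 / d + 272 * (1 + / d) / d.

Lemma log_threshold_ge1 d : 0 < d -> 1 <= log_threshold d.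
Proof.
move=> d0; have id0 := Rinv_0_lt_compat _ d0.
have : 0 <= 114 / d by apply: Rdiv_le_0_compat; lra.
have : 0 <= 272 * (1 + / d) / d by apply: Rdiv_le_0_compat; lra.
rewrite /log_threshold; lra.
Qed.

Lemma Rabs_div_half_sqr_sub1_le (L VT VR VX d : R) : 0 < d <= 1 / 2 -> log_threshold d <= L ->
  Rabs (VT - L ^ 2 / 2) <= 21 * L + 36 -> 0 <= VR <= 136 ->
  (1 - d) * VT - / d * VR <= VX <= (1 + d) * VT + (1 + / d) * VR ->
  Rabs (VX / (/ 2 * L ^ 2) - 1) <= 4 * d.
Proof.
move=> [d0 d_le] L_ge /Rabs_le_between[VT_lo VT_hi] [VR0 VR_le] [VX_lo VX_hi].
have id0 := Rinv_0_lt_compat _ d0.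
have L1 := Rle_trans _ _ _ (log_threshold_ge1 d d0) L_ge.
have scale t : t / d <= L -> t <= d * L.
  move=> tL; apply: Rle_trans (_ : d * (t / d) <= _); first by apply: Req_le; field; lra.
  by apply: Rmult_le_compat_l; lra.
have t1 : 0 <= 114 / d by apply: Rdiv_le_0_compat; lra.
have t2 : 0 <= 272 * (1 + / d) / d by apply: Rdiv_le_0_compat; lra.
have dL1 : 114 <= d * L by apply: scale; rewrite /log_threshold in L_ge; lra.
have dL2 : 272 * (1 + / d) <= d * L by apply: scale; rewrite /log_threshold in L_ge; lra.
set Q := L ^ 2 / 2 in VT_lo VT_hi *.
have Q0 : 0 < Q by rewrite /Q /=; nra.
have err_T : 21 * L + 36 <= d * Q by rewrite /Q /=; nra.
have err_R : (1 + / d) * VR <= d * Q.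
  have : (1 + / d) * VR <= (1 + / d) * 136 by apply: Rmult_le_compat_l; lra.
  rewrite /Q /=; nra.
have err_R' : / d * VR <= d * Q by nra.
have dQ : d * (d * Q) <= d * Q by nra.
have -> : VX / (/ 2 * L ^ 2) - 1 = (VX - Q) / Q by rewrite /Q; field; rewrite /=; nra.
rewrite Rabs_div; last lra; rewrite (Rabs_right Q); last lra.
apply: (Rmult_le_reg_r Q) => //; rewrite /Rdiv Rmult_assoc Rinv_l; last lra.
rewrite Rmult_1_r; apply: Rabs_le; split; nra.
Qed.

Lemma unif_var_ln_utilde_ratio_close n m d : 0 < d <= 1 / 2 -> (1 <= m)%nat -> (m * m <= n)%nat ->
  log_threshold d <= ln (INR m) ->
  Rabs (unif_var n (fun k => ln (INR (utilde n m k))) / (/ 2 * ln (INR m) ^ 2) - 1) <= 4 * d.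
Proof.
move=> d_bd m1 mn L_ge.
have m_le_n : (m <= n)%nat by apply: leq_trans mn; rewrite leq_pmulr.
have n0 : (0 < n)%nat by apply: leq_trans m_le_n.
rewrite (unif_var_ext n _ (fun k => ln_rad_upto n k - ln_rad_upto m k)); last first.
  by move=> k /andP[k1 _]; exact: ln_utilde.
apply: (Rabs_div_half_sqr_sub1_le _ (unif_var n (ln_rad_upto m))
  (unif_var n (ln_rad_upto n))) => //.
- exact: Rabs_unif_var_ln_rad_upto_sub_le_ln.
- by split; [exact: unif_var_ge0 | exact: unif_var_ln_rad_upto_le].
- by apply: unif_varB_bounds; case: d_bd.
Qed.

Lemma sqr_le_of_le_sqrt (a b : nat) : INR a <= sqrt (INR b) -> (a * a <= b)%nat.
Proof.
move=> ab; apply/leP/INR_le; rewrite mult_INR -(sqrt_sqrt (INR b) (pos_INR b)).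
by apply: Rmult_le_compat; try exact: pos_INR.
Qed.

Theorem theorem5p4 (m : nat -> nat)
  (Hle : exists N : nat, forall n : nat, (N <= n)%nat -> INR (m n) <= sqrt (INR n))
  (Hinf : is_lim_seq (fun n => INR (m n)) p_infty) :
  is_lim_seq
    (fun n => unif_var n (fun k => ln (INR (utilde n (m n) k)))
              / (/ 2 * (ln (INR (m n))) ^ 2))
    1.
Proof.
apply/is_lim_seq_spec => eps; have eps0 := cond_pos eps.
set d := Rmin (eps / 5) (1 / 2).
have d_bd : 0 < d <= 1 / 2 by split; [apply: Rmin_glb_lt | apply: Rmin_r]; lra.
have d_eps : 4 * d < eps by have := Rmin_l (eps / 5) (1 / 2); rewrite -/d; lra.
have [N1 m_large] := proj2 (is_lim_seq_spec _ _) Hinf (exp (log_threshold d)).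
have [N0 m_sqrt] := Hle.
exists (maxn N0 N1) => n /leP; rewrite geq_max => /andP[N0n N1n].
have := m_large n (leP N1n) => /= m_gt.
have thr1 := log_threshold_ge1 d (proj1 d_bd).
have exp_ge := exp_ineq1_le (log_threshold d).
apply: Rle_lt_trans (unif_var_ln_utilde_ratio_close n (m n) d d_bd _ _ _) d_eps.
- by apply/leP/INR_le; rewrite /=; lra.
- exact/sqr_le_of_le_sqrt/m_sqrt.
- by rewrite -(ln_exp (log_threshold d)); apply: ln_le; [exact: exp_pos | lra].
Qed.
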